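(* Assume $\rho_\alpha^{\mathrm{dir}}<1$, let $\theta^\star$ be the unique projected Bellman fixed point, and let $x_k:=\theta_k-\theta^\star$. Then for each $k\ge0$ there exists an $\mathcal F_k$-measurable stochastic policy $\mu_k$ such that \[ x_{k+1}=A_{\mu_k}x_k+\alpha b_k+\alpha\xi_{k+1}\quad\text{for all }k\ge0, \] where $\mathbb E[\xi_{k+1}\mid\mathcal F_k]=0$. Moreover, \[ b_k=\Phi^\top(e_{X_k}e_{X_k}^\top-D)\Big(R+\gamma PV_{\theta^\star}-\Phi\theta^\star+(\gamma P\Pi^{\mu_k}-I)\Phi x_k\Big). \]
   Context: Consider a finite discounted MDP with state space $\mathcal S=\{1,\dots,|\mathcal S|\}$, action space $\mathcal A=\{1,\dots,|\mathcal A|\}$, transition probabilities $P(s'\mid s,a)$, real rewards $r(s,a,s')$, expected reward $R(s,a)=\sum_{s'}P(s'\mid s,a)r(s,a,s')$, and discount factor $\gamma\in(0,1)$. State-action vectors are ordered as $(1,1),(2,1),\dots,(|\mathcal S|,1),(1,2),\dots$. The matrix $P$ has rows $P(\cdot\mid s,a)$, and $R$ has entries $R(s,a)$. For a state-action pair $i$, $e_i\in\mathbb R^{|\mathcal S||\mathcal A|}$ is the corresponding coordinate vector. A stochastic policy is a map $\mu:\mathcal S\to\Delta_{|\mathcal A|}$. The matrix $\Pi^\mu\in\mathbb R^{|\mathcal S|\times|\mathcal S||\mathcal A|}$ has entry $\mu(a\mid s)$ at row $s$, column $(s,a)$, and zeros elsewhere. The set $\Theta$ is the set of deterministic stationary policies.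 The feature matrix $\Phi$ has full column rank and rows $\phi(s,a)^\top$. Define $V_\theta(s):=\max_a\phi(s,a)^\top\theta$. The step size is $\alpha\in(0,1)$. Markovian observations: fix a behavior policy $b(a\mid s)$. The trajectory evolves as $s_{k+1}\sim P(\cdot\mid s_k,a_k)$, $r_{k+1}=r(s_k,a_k,s_{k+1})$, $a_{k+1}\sim b(\cdot\mid s_{k+1})$. The chain $X_k=(s_k,a_k)$ has a stationary distribution $d$ with $d>0$ everywhere, and $D=\mathrm{diag}(d)$. The filtration is $\mathcal F_k=\sigma(\theta_0,X_0,r_1,X_1,\dots,r_k,X_k)$, and $\theta_0$ is deterministic. The update is $\theta_{k+1}=\theta_k+\alpha\phi(X_k)\big(r_{k+1}+\gamma\max_u\phi(s_{k+1},u)^\top\theta_k-\phi(X_k)^\top\theta_k\big)$. Define $\delta(\theta):=R+\gamma PV_\theta-\Phi\theta$, \[ \xi_{k+1}:=\phi(X_k)\big(r_{k+1}+\gamma\max_u\phi(s_{k+1},u)^\top\theta_k-\phi(X_k)^\top\theta_k-e_{X_k}^\top\delta(\theta_k)\big), \] and $b_k:=\Phi^\top(e_{X_k}e_{X_k}^\top-D)\delta(\theta_k)$. Define $g(\theta):=\Phi^\top D\delta(\theta)$; a projected Bellman fixed point is a $\theta^\star$ with $g(\theta^\star)=0$. Define $A_\mu:=I-\alpha\Phi^\top D\Phi+\alpha\gamma\Phi^\top DP\Pi^\mu\Phi$, and let $\rho_\alpha^{\mathrm{dir}}$ be the joint spectral radius $\lim_k\max_{\pi_i\in\Theta}\|A_{\pi_k}\cdots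 A_{\pi_1}\|^{1/k}$. When $\rho_\alpha^{\mathrm{dir}}<1$, a unique projected Bellman fixed point exists. *)

From HB Require Import structures.
From mathcomp Require Import all_boot all_order all_algebra.
From mathcomp Require Import all_classical all_reals all_analysis.
Set Implicit Arguments. Unset Strict Implicit. Unset Printing Implicit Defensive.
Import Order.TTheory GRing.Theory Num.Theory.
Import numFieldNormedType.Exports.
Local Open Scope ring_scope.
Local Open Scope classical_set_scope.

(* State-action vectors are indexed by
   'I_(nA * nS); the pair (s,a) sits at index mxvec_index a s = a * nS + s,
   i.e. the ordering (1,1),(2,1),...,(|S|,1),(1,2),... of the paper. *)
Section Defs.
Variables (R : realType) (nS nA d : nat).
Local Notation S := 'I_nS.
Local Notation A := 'I_nA.
Local Notation N := (nA * nS)%N.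

Definition sa (s : S) (a : A) : 'I_N := mxvec_index a s.

Definition evec (s : S) (a : A) : 'cV[R]_N := delta_mx (sa s a) 0.

Definition savec (F : S -> A -> R) : 'cV[R]_N :=
  (mxvec (\matrix_(a < nA, s < nS) F s a))^T.

Definition stoch_policy (mu : S -> A -> R) : Prop :=
  (forall s a, 0 <= mu s a) /\ (forall s, \sum_(a : A) mu s a = 1).

Definition det_policy (pi : {ffun S -> A}) : S -> A -> R :=
  fun s a => (pi s == a)%:R.

(* Pi^mu : |S| x |S||A|, entry mu(a|s) at (s,(s,a)) *)
Definition Pimat (mu : S -> A -> R) : 'M[R]_(nS, N) :=
  \matrix_(s < nS, j < N)
     (mxvec (\matrix_(a < nA, s' < nS) ((s' == s)%:R * mu s a))) 0 j.

Variables (Phi : 'M[R]_(N, d)) (P : 'M[R]_(N, nS)).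

Definition feat (s : S) (a : A) : 'cV[R]_d := (row (sa s a) Phi)^T.

Definition trans (s : S) (a : A) (s' : S) : R := P (sa s a) s'.

Definition qval (theta : 'cV[R]_d) (s : S) (a : A) : R := (Phi *m theta) (sa s a) 0.

(* V_theta(s) = max_a phi(s,a)^T theta  (the seed is one of the values) *)
Definition vmax (theta : 'cV[R]_d) (s : S) : R :=
  \big[Num.max/head 0 [seq qval theta s a | a <- enum A]]_(a : A) qval theta s a.

Definition Vtheta (theta : 'cV[R]_d) : 'cV[R]_nS := \col_(s < nS) vmax theta s.

Variable (r : S -> A -> S -> R) (gamma alpha : R).

Definition Rexp : 'cV[R]_N := savec (fun s a => \sum_(s' : S) trans s a s' * r s a s').

Definition delta (theta : 'cV[R]_d) : 'cV[R]_N :=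
  Rexp + gamma *: (P *m Vtheta theta) - Phi *m theta.

Variable (dd : 'rV[R]_N).

Definition Dmat : 'M[R]_N := diag_mx dd.

Definition gfun (theta : 'cV[R]_d) : 'cV[R]_d := Phi^T *m Dmat *m delta theta.

Definition Amat (mu : S -> A -> R) : 'M[R]_d :=
  1%:M - alpha *: (Phi^T *m Dmat *m Phi)
       + (alpha * gamma) *: (Phi^T *m Dmat *m P *m Pimat mu *m Phi).

(* k-th term (k+1 factors) of the joint-spectral-radius sequence:
   max over pi_1..pi_{k+1} in Theta of ||A_{pi_{k+1}} ... A_{pi_1}||^{1/(k+1)};
   ||.|| is the (entrywise sup) matrix norm of mathcomp-analysis; all norms
   on 'M_d give the same limit. *)
Definition jsr_seq (k : nat) : R :=
  \big[Num.max/0]_(ps : {ffun 'I_k.+1 -> {ffun S -> A}})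
     (`| \big[mulmx/1%:M]_(i < k.+1) Amat (det_policy (ps (rev_ord i))) |
        `^ ((k.+1)%:R^-1)).

Definition jsr_lt1 : Prop :=
  exists2 rho : R, jsr_seq n @[n --> \oo] --> rho & rho < 1.

Definition td_step (theta : 'cV[R]_d) (x : S * A) (s' : S) : 'cV[R]_d :=
  theta + alpha *: ((r x.1 x.2 s' + gamma * vmax theta s' - qval theta x.1 x.2)
                     *: feat x.1 x.2).

(* theta_k as a function of the observed history X_0 = x0, X_1..X_k = hs
   (the rewards r_{j+1} = r(s_j,a_j,s_{j+1}) are determined by it) *)
Fixpoint theta_hist (theta : 'cV[R]_d) (x : S * A) (hs : seq (S * A)) : 'cV[R]_d :=
  match hs with
  | [::] => theta
  | y :: hs' => theta_hist (td_step theta x y.1) y hs'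
  end.

Definition xi_next (theta : 'cV[R]_d) (x : S * A) (s' : S) : 'cV[R]_d :=
  (r x.1 x.2 s' + gamma * vmax theta s' - qval theta x.1 x.2
     - delta theta (sa x.1 x.2) 0) *: feat x.1 x.2.

Definition b_term (theta : 'cV[R]_d) (x : S * A) : 'cV[R]_d :=
  Phi^T *m (evec x.1 x.2 *m (evec x.1 x.2)^T - Dmat) *m delta theta.

(* Conditional expectation given F_k of a quantity F(X_{k+1}) = F(s_{k+1},a_{k+1})
   (F may depend on the history up to k): by the Markov dynamics
   s_{k+1} ~ P(.|X_k), a_{k+1} ~ b(.|s_{k+1}). *)
Definition cond_next (b : S -> A -> R) (x : S * A) (F : S -> A -> 'cV[R]_d) : 'cV[R]_d :=
  \sum_(s' : S) \sum_(a' : A) (trans x.1 x.2 s' * b s' a') *: F s' a'.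

End Defs.

Definition stationary (R : realType) (nS nA : nat) (P : 'M[R]_(nA * nS, nS))
  (b : 'I_nS -> 'I_nA -> R) (dd : 'rV[R]_(nA * nS)) : Prop :=
  forall (s' : 'I_nS) (a' : 'I_nA),
    dd 0 (sa s' a') =
      \sum_(s : 'I_nS) \sum_(a : 'I_nA) dd 0 (sa s a) * trans P s a s' * b s' a'.

From HB Require Import structures.
From mathcomp Require Import all_boot all_order all_algebra.
From mathcomp Require Import all_classical all_reals all_analysis.
From mathcomp Require Import ring.
Set Implicit Arguments. Unset Strict Implicit. Unset Printing Implicit Defensive.
Import Order.TTheory GRing.Theory Num.Theory.
Import numFieldNormedType.Exports.
Local Open Scope ring_scope.

(* For each state s, V_theta(s) - V_theta_star(s) lies between the Q-value
   differences at the greedy action of theta_star and at that of theta, so a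
   mixture of these two actions reproduces it exactly.  The resulting policy
   mu_k, a function of theta_k alone, linearises the Bellman error:
   delta(theta_k) = delta(theta_star) + (gamma P Pi^mu_k - I) Phi x_k.
   The TD increment splits into its D-average g(theta_k), the Markov term b_k
   and the zero-mean noise xi_{k+1}; as g(theta_star) = 0, this linearisation
   gives A_mu_k x_k = x_k + alpha g(theta_k), and the recursion follows. *)

Lemma sum_indicator_mul (R : pzSemiRingType) (I : finType) (i : I) (F : I -> R) :
  \sum_j (j == i)%:R * F j = F i.
Proof.
under eq_bigr do rewrite mulr_natl mulrb.
by rewrite -big_mkcond big_pred1_eq.
Qed.

Lemma exists_distr_mean (R : numFieldType) (I : finType) (f : I -> R) i1 i2 c :
  f i2 <= c <= f i1 ->
  exists m : I -> R, [/\ forall i, 0 <= m i, \sum_i m i = 1 &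
                         \sum_i m i * f i = c].
Proof.
case/andP=> lo_c c_hi; set l := (c - f i2) / (f i1 - f i2).
have l_ge0 : 0 <= l by rewrite divr_ge0 // subr_ge0 // (le_trans lo_c).
have l_scale : l * (f i1 - f i2) = c - f i2.
  have [E|neq] := eqVneq (f i1) (f i2); last by rewrite divfK // subr_eq0.
  rewrite E subrr mulr0; apply/esym/eqP.
  by rewrite subr_eq0 eq_le lo_c -E c_hi.
have l_le1 : l <= 1.
  have [E|neq] := eqVneq (f i1) (f i2); first by rewrite /l E subrr invr0 mulr0.
  rewrite ler_pdivrMr ?mul1r ?lerD2r //.
  by rewrite subr_gt0 lt_neqAle eq_sym neq (le_trans lo_c).
exists (fun i => (i == i1)%:R * l + (i == i2)%:R * (1 - l)); split.
- by move=> i; rewrite addr_ge0 // mulr_ge0 // subr_ge0.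
- by rewrite big_split /= !sum_indicator_mul addrC subrK.
- under eq_bigr do rewrite mulrDl -!mulrA.
  rewrite big_split /= !sum_indicator_mul.
  by rewrite mulrA -/l mulrBl mul1r addrCA -mulrBr l_scale addrC subrK.
Qed.

Section QLearningErrorDecomposition.
Variables (R : realType) (nS nA d : nat).
Local Notation S := 'I_nS.
Local Notation A := 'I_nA.
Local Notation N := (nA * nS)%N.
Variables (Phi : 'M[R]_(N, d)) (P : 'M[R]_(N, nS)) (r : S -> A -> S -> R).
Variables (gamma alpha : R) (dd : 'rV[R]_N).

Lemma vmax_ge th s a : qval Phi th s a <= vmax Phi th s.
Proof. exact: le_bigmax. Qed.

Lemma vmax_attained th s : (0 < nA)%N -> exists a, vmax Phi th s = qval Phi th s a.
Proof.
move=> nA_gt0; rewrite /vmax.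
have [a0 ->] : exists a, head 0 [seq qval Phi th s a | a <- enum A] = qval Phi th s a.
  case E: (enum A) => [|a0 ?]; last by exists a0.
  by rewrite -(size_enum_ord nA) E in nA_gt0.
elim/big_ind: _ => [|x y [a ->] [b ->]|a _]; [by exists a0| |by exists a].
by case: (leP (qval Phi th s a) (qval Phi th s b)); [exists b|exists a].
Qed.

Lemma Pimat_mulmx_entry (mu : S -> A -> R) (v : 'cV[R]_N) s :
  (Pimat mu *m v) s 0 = \sum_a mu s a * v (sa s a) 0.
Proof.
rewrite mxE (reindex (uncurry (@mxvec_index nA nS))); last first.
  have [g g_can can_g] := curry_mxvec_bij nA nS.
  by apply: onW_bij; exists g => x; [apply: g_can|apply: can_g].
set F := fun a s' => Pimat mu s (mxvec_index a s') * v (mxvec_index a s') 0.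
rewrite (eq_bigr (fun p => F p.1 p.2)); last by case.
rewrite -(pair_bigA _ F).
apply: eq_bigr => a _; rewrite (bigD1 s) //= big1 ?addr0.
  by rewrite /F mxE mxvecE mxE eqxx mul1r.
by move=> s' /negbTE s'_neq; rewrite /F mxE mxvecE mxE s'_neq !mul0r.
Qed.

Lemma vmax_sub_mean th ths s : (0 < nA)%N ->
  exists m : A -> R, [/\ forall a, 0 <= m a, \sum_a m a = 1 &
    \sum_a m a * (qval Phi th s a - qval Phi ths s a)
    = vmax Phi th s - vmax Phi ths s].
Proof.
move=> nA_gt0; have [a1 th_a1] := vmax_attained th s nA_gt0.
have [a2 ths_a2] := vmax_attained ths s nA_gt0.
apply: (@exists_distr_mean _ _ _ a1 a2); apply/andP; split.
- by rewrite ths_a2 lerD2r vmax_ge.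
- by rewrite th_a1 lerD2l lerN2 vmax_ge.
Qed.

Lemma exists_policy_Vtheta_sub th ths : (0 < nA)%N ->
  exists mu, stoch_policy mu /\
    Pimat mu *m (Phi *m (th - ths)) = Vtheta Phi th - Vtheta Phi ths.
Proof.
move=> nA_gt0.
have /boolp.choice[mu mu_mean] := fun s => vmax_sub_mean th ths s nA_gt0.
exists mu; split; first by split=> s; case: (mu_mean s).
apply/matrixP => s j; rewrite ord1 Pimat_mulmx_entry !mxE.
case: (mu_mean s) => _ _ <-; apply: eq_bigr => a _.
by rewrite /qval mulmxBr !mxE.
Qed.

Lemma delta_sub_policy {mu th ths} :
  Pimat mu *m (Phi *m (th - ths)) = Vtheta Phi th - Vtheta Phi ths ->
  delta Phi P r gamma th = delta Phi P r gamma ths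
    + (gamma *: (P *m Pimat mu) - 1%:M) *m Phi *m (th - ths).
Proof.
move=> Pimat_V; rewrite -mulmxA mulmxBl mul1mx -scalemxAl -mulmxA Pimat_V.
rewrite !mulmxBr scalerBr /delta.
move: (Rexp P r) (P *m _) (P *m _) (Phi *m th) (Phi *m ths) => a b c e f.
apply/matrixP=> i j; rewrite !mxE; ring.
Qed.

Lemma Amat_mulmx mu (x : 'cV[R]_d) :
  Amat Phi P gamma alpha dd mu *m x =
  x + alpha *: (Phi^T *m Dmat dd *m ((gamma *: (P *m Pimat mu) - 1%:M) *m Phi *m x)).
Proof.
rewrite /Amat !mulmxDl -!scalemxAl !mulNmx !mul1mx mulmxDr mulmxN.
rewrite -scalemxAr scalerDr scalerN scalerA !mulmxA.
by rewrite -scalemxAl [RHS]addrA addrAC.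
Qed.

Lemma Amat_policy_mulmx {mu th ths} :
  Pimat mu *m (Phi *m (th - ths)) = Vtheta Phi th - Vtheta Phi ths ->
  Amat Phi P gamma alpha dd mu *m (th - ths) =
  th - ths + alpha *: (gfun Phi P r gamma dd th - gfun Phi P r gamma dd ths).
Proof.
move=> Pimat_V; rewrite Amat_mulmx /gfun (delta_sub_policy Pimat_V).
by rewrite [in RHS]mulmxDr (addrC (_ *m delta _ _ _ _ ths)) addrK.
Qed.

Lemma b_termE th (X : S * A) :
  b_term Phi P r gamma dd th X =
  delta Phi P r gamma th (sa X.1 X.2) 0 *: feat Phi X.1 X.2 - gfun Phi P r gamma dd th.
Proof.
rewrite /b_term /gfun (mulmxBr Phi^T) (mulmxBl (Phi^T *m _)); congr (_ - _).
rewrite -!mulmxA [(evec R _ _)^T *m _]mx11_scalar mul_mx_scalar.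
by rewrite /evec trmx_delta -rowE mxE -scalemxAr /feat tr_row colE.
Qed.

Lemma td_step_decomposition th X s' :
  td_step Phi r gamma alpha th X s' =
  th + alpha *: (gfun Phi P r gamma dd th + b_term Phi P r gamma dd th X
                 + xi_next Phi P r gamma th X s').
Proof.
rewrite b_termE /xi_next /td_step; congr (_ + _ *: _).
rewrite [in RHS]scalerBl [gfun _ _ _ _ _ _ + _]addrC subrK.
by rewrite [in RHS]addrC subrK.
Qed.

Lemma delta_entry th s a :
  delta Phi P r gamma th (sa s a) 0 =
  \sum_s' trans P s a s' * (r s a s' + gamma * vmax Phi th s') - qval Phi th s a.
Proof.
rewrite /delta /Rexp /savec /qval !mxE mxvecE mxE; congr (_ - _).
rewrite mulr_sumr -big_split; apply: eq_bigr => s' _.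
by rewrite /trans mxE mulrDr mulrCA.
Qed.

Lemma cond_next_xi_next (b : S -> A -> R) th X :
  (forall s, \sum_a b s a = 1) -> (forall s a, \sum_s' trans P s a s' = 1) ->
  cond_next P b X (fun s' _ => xi_next Phi P r gamma th X s') = 0.
Proof.
move=> b_sum P_sum; rewrite /cond_next.
under eq_bigr do rewrite -scaler_suml -mulr_sumr b_sum mulr1.
rewrite /xi_next; under eq_bigr do rewrite scalerA.
rewrite -scaler_suml delta_entry.
under eq_bigr do rewrite opprB addrA subrK mulrBr.
by rewrite sumrB -mulr_suml P_sum mul1r subrr scale0r.
Qed.

Lemma theta_hist_rcons th x hs y :
  theta_hist Phi r gamma alpha th x (rcons hs y)
  = td_step Phi r gamma alpha (theta_hist Phi r gamma alpha th x hs) (last x hs) y.1.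
Proof. by elim: hs th x => [|z hs IH] th x //=. Qed.

End QLearningErrorDecomposition.


Theorem proposition3 (R : realType) (nS nA d : nat)
  (Phi : 'M[R]_(nA * nS, d)) (P : 'M[R]_(nA * nS, nS))
  (r : 'I_nS -> 'I_nA -> 'I_nS -> R) (gamma alpha : R)
  (b : 'I_nS -> 'I_nA -> R) (dd : 'rV[R]_(nA * nS))
  (theta0 thetastar : 'cV[R]_d) :
  (0 < nS)%N -> (0 < nA)%N ->
  (forall s a s', 0 <= trans P s a s') ->
  (forall s a, \sum_(s' : 'I_nS) trans P s a s' = 1) ->
  0 < gamma < 1 -> 0 < alpha < 1 ->
  \rank Phi = d ->
  stoch_policy b ->
  (forall j, 0 < dd 0 j) -> \sum_(j < nA * nS) dd 0 j = 1 ->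
  stationary P b dd ->
  jsr_lt1 Phi P gamma alpha dd ->
  gfun Phi P r gamma dd thetastar = 0 ->
  exists mu : 'I_nS * 'I_nA -> seq ('I_nS * 'I_nA) -> ('I_nS -> 'I_nA -> R),
    forall (x0 : 'I_nS * 'I_nA) (hs : seq ('I_nS * 'I_nA)),
      let X := last x0 hs in
      let thk := theta_hist Phi r gamma alpha theta0 x0 hs in
      let xk := thk - thetastar in
      let bk := b_term Phi P r gamma dd thk X in
      [/\ stoch_policy (mu x0 hs),
          (forall y : 'I_nS * 'I_nA,
             theta_hist Phi r gamma alpha theta0 x0 (rcons hs y) - thetastar
             = Amat Phi P gamma alpha dd (mu x0 hs) *m xk
               + alpha *: bk + alpha *: xi_next Phi P r gamma thk X y.1),
          cond_next P b X (fun s' _ => xi_next Phi P r gamma thk X s') = 0 &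
          bk = Phi^T *m (evec R X.1 X.2 *m (evec R X.1 X.2)^T - Dmat dd)
                 *m (Rexp P r + gamma *: (P *m Vtheta Phi thetastar)
                     - Phi *m thetastar
                     + (gamma *: (P *m Pimat (mu x0 hs)) - 1%:M) *m Phi *m xk)].
Proof.
(* The joint spectral radius bound, the rank of Phi and the properties of d
   matter only for the existence of theta_star; here g(theta_star) = 0 suffices. *)
move=> _ nA_gt0 _ P_sum _ _ _ [_ b_sum] _ _ _ _ g_star.
have /boolp.choice[mu mu_spec] :=
  fun th => exists_policy_Vtheta_sub Phi th thetastar nA_gt0.
exists (fun x0 hs => mu (theta_hist Phi r gamma alpha theta0 x0 hs)).
move=> x0 hs X thk xk bk; have [mu_stoch mu_V] := mu_spec thk.
split=> //.
- move=> y; rewrite theta_hist_rcons (td_step_decomposition Phi P r gamma alpha dd).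
  rewrite (Amat_policy_mulmx P r gamma alpha dd mu_V) g_star subr0 !scalerDr.
  by rewrite addrAC !addrA.
- exact: cond_next_xi_next.
- by rewrite /bk /b_term (delta_sub_policy P r gamma mu_V).
Qed.
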